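(* For every set $\Gamma\subseteq\mathcal{L}(\boxdot)$ and every $\phi\in\mathcal{L}(\boxdot)$, the following are equivalent: (a) $\Gamma\vdash_{{\bf K4^\boxdot}}\phi$; (b) $\Gamma\vDash_{qt}\phi$; (c) $\Gamma\vDash_{pt}\phi$.
   Context: Fix a nonempty set $\mathbf{P}$ of propositional variables. A bimodal model is $\langle S,R_1,R_2,V\rangle$ with $S$ nonempty, $R_1,R_2\subseteq S\times S$, $V:\mathbf{P}\to\mathcal{P}(S)$. $\mathcal{L}(\boxdot):\ \phi::=p\mid\neg\phi\mid(\phi\wedge\phi)\mid\boxdot\phi$. Truth: $\mathcal{M},s\vDash\boxdot\phi$ iff for all $t,u$ with $sR_1t$ and $sR_2u$, ($\mathcal{M},t\vDash\phi\iff\mathcal{M},u\vDash\phi$); atoms and Booleans as usual. ${\bf K^\boxdot}$ has axioms: all instances of propositional tautologies; $\boxdot\top$; $\boxdot\phi\leftrightarrow\boxdot\neg\phi$; $\boxdot\phi\wedge\boxdot\psi\to\boxdot(\phi\wedge\psi)$; $\boxdot\phi\to\boxdot(\phi\vee\psi)\vee\boxdot(\neg\phi\vee\chi)$; rules: modus ponens and RE: from $\phi\leftrightarrow\psi$ infer $\boxdot\phi\leftrightarrow\boxdot\psi$. ${\bf K4^\boxdot}$ is ${\bf K^\boxdot}$ plus the axiom schema $\boxdot\phi\to\boxdot(\boxdot\phi\vee\psi)$. A bimodal frame/model is $qt$ (quasi-transitive) if for all $i,j\in\{1,2\}$ and all $x,y,z$: $xR_iy\wedge yR_jz\to xR_jz$;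 it is $pt$ (pseudo-transitive) if for all $i,j\in\{1,2\}$ and all $x,y,z$: $xR_iy\wedge yR_jz\to xR_1z\wedge xR_2z$. $\Gamma\vDash_{qt}\phi$ means: for every $qt$-model $\mathcal{M}$ and state $s$, if all of $\Gamma$ is true at $s$ then $\phi$ is true at $s$; similarly $\vDash_{pt}$. $\Gamma\vdash\phi$ means some finite conjunction of members of $\Gamma$ provably implies $\phi$. *)

From Stdlib Require Import List.
Import ListNotations.

Section Syntax.
Variable P : Type.

Inductive form : Type :=
| Var : P -> form
| Neg : form -> form
| And : form -> form -> form
| Box : form -> form.

Definition Or (a b : form) : form := Neg (And (Neg a) (Neg b)).
Definition Imp (a b : form) : form := Neg (And a (Neg b)).
Definition Iff (a b : form) : form := And (Imp a b) (Imp b a).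

Fixpoint beval (v : form -> bool) (f : form) : bool :=
  match f with
  | Var _ => v f
  | Box _ => v f
  | Neg a => negb (beval v a)
  | And a b => andb (beval v a) (beval v b)
  end.

Definition tautology (f : form) : Prop := forall v : form -> bool, beval v f = true.

(* The set P of variables is nonempty: p0 is a witness, used to define top. *)
Definition Top (p0 : P) : form := Neg (And (Var p0) (Neg (Var p0))).

Inductive PrfK4 (p0 : P) : form -> Prop :=
| ax_taut : forall f, tautology f -> PrfK4 p0 f
| ax_top : PrfK4 p0 (Box (Top p0))
| ax_neg : forall f, PrfK4 p0 (Iff (Box f) (Box (Neg f)))
| ax_and : forall f g, PrfK4 p0 (Imp (And (Box f) (Box g)) (Box (And f g)))
| ax_or : forall f g h,
    PrfK4 p0 (Imp (Box f) (Or (Box (Or f g)) (Box (Or (Neg f) h))))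
| ax_4 : forall f g, PrfK4 p0 (Imp (Box f) (Box (Or (Box f) g)))
| r_mp : forall f g, PrfK4 p0 (Imp f g) -> PrfK4 p0 f -> PrfK4 p0 g
| r_re : forall f g, PrfK4 p0 (Iff f g) -> PrfK4 p0 (Iff (Box f) (Box g)).

Fixpoint bigAnd (p0 : P) (l : list form) : form :=
  match l with
  | [] => Top p0
  | f :: l' => And f (bigAnd p0 l')
  end.

Definition derivK4 (p0 : P) (Gamma : form -> Prop) (phi : form) : Prop :=
  exists l : list form, (forall g, In g l -> Gamma g) /\ PrfK4 p0 (Imp (bigAnd p0 l) phi).

Fixpoint sat {S : Type} (R1 R2 : S -> S -> Prop) (V : P -> S -> Prop)
    (s : S) (f : form) : Prop :=
  match f with
  | Var p => V p s
  | Neg a => ~ sat R1 R2 V s a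
  | And a b => sat R1 R2 V s a /\ sat R1 R2 V s b
  | Box a => forall t u, R1 s t -> R2 s u ->
      (sat R1 R2 V t a <-> sat R1 R2 V u a)
  end.

Definition rel_i {S : Type} (R1 R2 : S -> S -> Prop) (i : bool) : S -> S -> Prop :=
  if i then R1 else R2.

Definition quasi_transitive {S : Type} (R1 R2 : S -> S -> Prop) : Prop :=
  forall (i j : bool) (x y z : S),
    rel_i R1 R2 i x y -> rel_i R1 R2 j y z -> rel_i R1 R2 j x z.

Definition pseudo_transitive {S : Type} (R1 R2 : S -> S -> Prop) : Prop :=
  forall (i j : bool) (x y z : S),
    rel_i R1 R2 i x y -> rel_i R1 R2 j y z -> R1 x z /\ R2 x z.

Definition conseq_qt (Gamma : form -> Prop) (phi : form) : Prop :=
  forall (S : Type) (R1 R2 : S -> S -> Prop) (V : P -> S -> Prop) (s : S),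
    quasi_transitive R1 R2 ->
    (forall g, Gamma g -> sat R1 R2 V s g) -> sat R1 R2 V s phi.

Definition conseq_pt (Gamma : form -> Prop) (phi : form) : Prop :=
  forall (S : Type) (R1 R2 : S -> S -> Prop) (V : P -> S -> Prop) (s : S),
    pseudo_transitive R1 R2 ->
    (forall g, Gamma g -> sat R1 R2 V s g) -> sat R1 R2 V s phi.

End Syntax.

Arguments Var {P}. Arguments Neg {P}. Arguments And {P}. Arguments Box {P}.

(* Soundness (a -> b): every axiom and rule of K4^boxdot is valid on all bimodal models,
   except axiom 4, which needs quasi-transitivity.  Since pseudo-transitive frames are
   quasi-transitive, (b -> c) is immediate.  Completeness (c -> a) is a canonical model
   construction: the worlds are the maximal consistent sets, both relations are the
   relation [canon_rel] ("t contains every formula necessary at s", where psi is necessary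
   at s when Box (Or chi psi) is in s for every chi), and axiom 4 makes it transitive, hence
   the canonical frame is pseudo-transitive.  The truth lemma rests on two facts: the
   successors of s agree on phi when Box phi is in s (axiom [ax_or]), and when Box x is not
   in s there is a successor containing x (Lindenbaum's lemma, axioms [ax_top], [ax_and]). *)

From Stdlib Require Import List Bool Classical ClassicalEpsilon.
From mathcomp Require classical_sets.
Import ListNotations.

Section Lindenbaum.
Variable T : Type.
Variable bad : list T -> Prop.

Definition consistent (A : T -> Prop) : Prop :=
  forall l, (forall x, In x l -> A x) -> ~ bad l.

Lemma consistent_sub (A B : T -> Prop) :
  (forall x, A x -> B x) -> consistent B -> consistent A.
Proof. intros AB HB l Hl. apply HB. intros x Hx. apply AB, Hl, Hx. Qed.

Lemma chain_cover (A0 : T -> Prop) (F : (T -> Prop) -> Prop) (l : list T) :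
  (forall X Y, F X -> F Y -> (forall x, X x -> Y x) \/ (forall x, Y x -> X x)) ->
  (forall x, In x l -> A0 x \/ exists2 X, F X & X x) ->
  exists B, (F B \/ B = (fun _ => False)) /\ forall x, In x l -> A0 x \/ B x.
Proof.
  intros Ftot. induction l as [|a l IH]; intros Hl.
  - exists (fun _ => False). split; [right; reflexivity | intros x []].
  - destruct IH as [B [HB Hcov]]. { intros x Hx. apply Hl. right. exact Hx. }
    destruct (Hl a (or_introl eq_refl)) as [Ha | [X FX Xa]].
    + exists B. split; [exact HB|]. intros x [<- | Hx]; auto.
    + destruct HB as [FB | ->].
      * destruct (Ftot X B FX FB) as [XB | BX].
        -- exists B. split; [left; exact FB|]. intros x [<- | Hx]; auto.
        -- exists X. split; [left; exact FX|].
           intros x [<- | Hx]; [auto|]. destruct (Hcov x Hx); auto.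
      * exists X. split; [left; exact FX|].
        intros x [<- | Hx]; [auto|]. destruct (Hcov x Hx) as [|[]]; auto.
Qed.

(* Zorn's lemma is applied to the sets [B] such that
   [A0] union [B] is consistent, which is closed under unions of chains by [chain_cover]. *)
Lemma lindenbaum (A0 : T -> Prop) : consistent A0 ->
  exists M, (forall x, A0 x -> M x) /\ consistent M /\
    forall x, consistent (fun y => M y \/ y = x) -> M x.
Proof.
  intros H0.
  destruct (@classical_sets.Zorn_bigcup T (fun B => consistent (fun y => A0 y \/ B y)))
    as [A [HA Amax]].
  - intros F FQ Ftot l Hl.
    destruct (chain_cover A0 F l Ftot Hl) as [B [[FB | ->] HB]].
    + exact (FQ B FB l HB).
    + apply H0. intros x Hx. destruct (HB x Hx) as [|[]]; auto.
  - exists (fun y => A0 y \/ A y). split; [auto | split; [exact HA|]].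
    intros x Hx. apply NNPP. intros Hnx.
    apply (Amax (fun y => A y \/ y = x)).
    + split; [intros y Hy; left; exact Hy|].
      intros Hsub. apply Hnx. right. apply Hsub. right. reflexivity.
    + revert Hx. apply consistent_sub. intros y [Hy | [Hy | Hy]]; auto.
Qed.

End Lindenbaum.
Arguments consistent {T}.

Arguments beval {P}. Arguments Imp {P}. Arguments Or {P}. Arguments Iff {P}.
Arguments Top {P}. Arguments bigAnd {P}. Arguments PrfK4 {P}.

Section Soundness.
Variables (P : Type) (p0 : P) (S : Type) (R1 R2 : S -> S -> Prop) (V : P -> S -> Prop).
Local Notation "s ||= f" := (sat P R1 R2 V s f) (at level 70).

(* A tautology holds at every state: read truth at [s] as a Boolean valuation. *)
Lemma sat_tautology (f : form P) (s : S) : tautology P f -> s ||= f.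
Proof.
  intros Hf.
  set (v := fun g => if excluded_middle_informative (s ||= g) then true else false).
  assert (Hv : forall g, beval v g = true <-> s ||= g).
  { induction g as [p | a IHa | a IHa b IHb | a]; simpl.
    - unfold v. destruct excluded_middle_informative; split; auto; discriminate.
    - rewrite negb_true_iff, <- not_true_iff_false, IHa. tauto.
    - rewrite andb_true_iff, IHa, IHb. tauto.
    - unfold v. destruct excluded_middle_informative; split; auto; discriminate. }
  apply Hv, Hf.
Qed.

Lemma sat_imp (s : S) (a b : form P) : s ||= Imp a b <-> (s ||= a -> s ||= b).
Proof. simpl. destruct (classic (s ||= b)); tauto. Qed.

Lemma sat_or (s : S) (a b : form P) : s ||= Or a b <-> (s ||= a \/ s ||= b).
Proof. simpl. destruct (classic (s ||= a)), (classic (s ||= b)); tauto. Qed.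

Lemma sat_iff (s : S) (a b : form P) : s ||= Iff a b <-> (s ||= a <-> s ||= b).
Proof. simpl. destruct (classic (s ||= a)), (classic (s ||= b)); tauto. Qed.

(* The axiom [ax_or] is valid: if [f] takes a constant value on the successors of [s], then
   [Or f g] is true on all of them, or else [Or (Neg f) h] is. *)
Lemma sat_ax_or (s : S) (f g h : form P) :
  s ||= Imp (Box f) (Or (Box (Or f g)) (Box (Or (Neg f) h))).
Proof.
  rewrite sat_imp, sat_or. intros Hf. simpl in Hf.
  destruct (classic (exists t, R1 s t /\ t ||= f)) as [[t [Ht Hft]] | Hnone].
  - left. intros t' u' Ht' Hu'. rewrite !sat_or.
    assert (Hfu : u' ||= f) by exact (proj1 (Hf t u' Ht Hu') Hft).
    assert (Hft' : t' ||= f) by exact (proj2 (Hf t' u' Ht' Hu') Hfu).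
    tauto.
  - right. intros t' u' Ht' Hu'. rewrite !sat_or. simpl.
    assert (Hnft : ~ t' ||= f) by (intros Htf; apply Hnone; exists t'; auto).
    assert (Hnfu : ~ u' ||= f) by (rewrite <- (Hf t' u' Ht' Hu'); exact Hnft).
    tauto.
Qed.

(* The axiom 4: under quasi-transitivity every successor of [s] only sees successors of
   [s], so [Box f] holds at all successors of a state satisfying [Box f]. *)
Lemma sat_ax_4 (s : S) (f g : form P) : quasi_transitive R1 R2 ->
  s ||= Imp (Box f) (Box (Or (Box f) g)).
Proof.
  intros Hqt. rewrite sat_imp. intros Hf.
  assert (Hsucc : forall i t, rel_i R1 R2 i s t -> t ||= Box f).
  { intros i t Ht t' u' Ht' Hu'.
    exact (Hf t' u' (Hqt i true s t t' Ht Ht') (Hqt i false s t u' Ht Hu')). }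
  intros t u Ht Hu. rewrite !sat_or.
  assert (Hft : t ||= Box f) by exact (Hsucc true t Ht).
  assert (Hfu : u ||= Box f) by exact (Hsucc false u Hu).
  tauto.
Qed.

Lemma soundness (f : form P) : quasi_transitive R1 R2 -> PrfK4 p0 f -> forall s, s ||= f.
Proof.
  intros Hqt Hf. induction Hf as [f Ht | | f | f g | f g h | f g | f g _ IHfg _ IHf
    | f g _ IH]; intros s.
  - exact (sat_tautology f s Ht).
  - intros t u _ _. simpl. tauto.
  - rewrite sat_iff. simpl. split; intros Hf t u Ht Hu; specialize (Hf t u Ht Hu);
      destruct (classic (t ||= f)), (classic (u ||= f)); tauto.
  - rewrite sat_imp. simpl. intros [Hf Hg] t u Ht Hu.
    specialize (Hf t u Ht Hu). specialize (Hg t u Ht Hu). tauto.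
  - apply sat_ax_or.
  - apply sat_ax_4, Hqt.
  - exact (proj1 (sat_imp s f g) (IHfg s) (IHf s)).
  - assert (E : forall x, x ||= f <-> x ||= g) by (intros x; apply sat_iff, IH).
    rewrite sat_iff. simpl. split; intros H t u Ht Hu.
    + rewrite <- (E t), <- (E u). exact (H t u Ht Hu).
    + rewrite (E t), (E u). exact (H t u Ht Hu).
Qed.

Lemma sat_bigAnd (s : S) (l : list (form P)) :
  (forall g, In g l -> s ||= g) -> s ||= bigAnd p0 l.
Proof.
  induction l as [|a l IH]; intros Hl; simpl.
  - tauto.
  - split; [apply Hl; left; reflexivity | apply IH; intros g Hg; apply Hl; right; exact Hg].
Qed.

End Soundness.

Ltac boolean_taut :=
  unfold tautology; intros; cbn [bigAnd] in *;
  unfold Imp, Or, Iff, Top in *; simpl in *;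
  repeat match goal with
  | H : _ && _ = true |- _ => apply andb_true_iff in H as [? ?]
  | H : true = true -> _ |- _ => specialize (H eq_refl)
  | H : _ /\ _ |- _ => destruct H
  | |- context [beval ?v ?x] => destruct (beval v x)
  | H : context [beval ?v ?x] |- _ => destruct (beval v x)
  | |- context [?v ?x] => is_var v; match type of v with form _ -> bool => destruct (v x) end
  | H : context [?v ?x] |- _ =>
      is_var v; match type of v with form _ -> bool => destruct (v x) end
  end; simpl in *; try reflexivity; try discriminate; auto.

Section Derivations.
Variables (P : Type) (p0 : P).
Local Notation deriv := (derivK4 P p0).

Definition Bot : form P := Neg (Top p0).

Lemma beval_bigAnd (v : form P -> bool) (l : list (form P)) :
  beval v (bigAnd p0 l) = true <-> forall y, In y l -> beval v y = true.
Proof.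
  induction l as [|a l IH]; simpl.
  - split; [intros _ y [] | intros _; destruct (v (Var p0)); reflexivity].
  - rewrite andb_true_iff, IH. split.
    + intros [Ha Hl] y [<- | Hy]; auto.
    + intros H. split; auto.
Qed.

Lemma prf_taut1 (a b : form P) :
  (forall v, beval v a = true -> beval v b = true) -> PrfK4 p0 a -> PrfK4 p0 b.
Proof.
  intros H Ha. apply (r_mp P p0 a b); [|exact Ha].
  apply ax_taut. intros v. specialize (H v). boolean_taut.
Qed.

Lemma prf_taut2 (a b c : form P) :
  (forall v, beval v a = true -> beval v b = true -> beval v c = true) ->
  PrfK4 p0 a -> PrfK4 p0 b -> PrfK4 p0 c.
Proof.
  intros H Ha Hb. apply (r_mp P p0 b c); [|exact Hb]. apply (r_mp P p0 a); [|exact Ha].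
  apply ax_taut. intros v. specialize (H v). boolean_taut.
Qed.

Lemma deriv_assum (s : form P -> Prop) (a : form P) : s a -> deriv s a.
Proof.
  intros Ha. exists [a]. split; [intros y [<- | []]; exact Ha|].
  apply ax_taut. boolean_taut.
Qed.

Lemma deriv_thm (s : form P -> Prop) (a : form P) : PrfK4 p0 a -> deriv s a.
Proof.
  intros Ha. exists []. split; [intros y []|].
  revert Ha. apply prf_taut1. boolean_taut.
Qed.

Lemma deriv_taut2 (s : form P -> Prop) (a b c : form P) :
  (forall v, beval v a = true -> beval v b = true -> beval v c = true) ->
  deriv s a -> deriv s b -> deriv s c.
Proof.
  intros H [l [Hl Ha]] [m [Hm Hb]]. exists (l ++ m). split.
  - intros y Hy. apply in_app_or in Hy as [Hy | Hy]; auto.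
  - revert Ha Hb. apply prf_taut2. intros v Ha Hb.
    assert (Hlm : beval v (bigAnd p0 (l ++ m)) = true ->
                  beval v (bigAnd p0 l) = true /\ beval v (bigAnd p0 m) = true).
    { rewrite !beval_bigAnd. intros Hlm. split; intros y Hy; apply Hlm, in_or_app; auto. }
    specialize (H v). boolean_taut.
Qed.

Lemma deriv_taut1 (s : form P -> Prop) (a b : form P) :
  (forall v, beval v a = true -> beval v b = true) -> deriv s a -> deriv s b.
Proof. intros H Ha. apply (deriv_taut2 s a a b); auto. Qed.

Lemma list_split (s : form P -> Prop) (x : form P) (l : list (form P)) :
  (forall y, In y l -> s y \/ y = x) ->
  exists m, (forall y, In y m -> s y) /\ forall y, In y l -> In y m \/ y = x.
Proof.
  induction l as [|a l IH]; intros Hl.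
  - exists []. split; intros y [].
  - destruct IH as [m [Hm Hcov]]. { intros y Hy. apply Hl. right. exact Hy. }
    destruct (Hl a (or_introl eq_refl)) as [Ha | ->].
    + exists (a :: m). split.
      * intros y [<- | Hy]; auto.
      * intros y [<- | Hy]; [left; left; reflexivity|].
        destruct (Hcov y Hy); [left; right|right]; auto.
    + exists m. split; [exact Hm|]. intros y [<- | Hy]; auto.
Qed.

Lemma deduction (s : form P -> Prop) (x f : form P) :
  deriv (fun y => s y \/ y = x) f -> deriv s (Imp x f).
Proof.
  intros [l [Hl Hf]]. destruct (list_split s x l Hl) as [m [Hm Hcov]].
  exists m. split; [exact Hm|]. revert Hf. apply prf_taut1. intros v Hv.
  assert (Hl' : beval v (bigAnd p0 m) = true -> beval v x = true ->
                beval v (bigAnd p0 l) = true).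
  { rewrite !beval_bigAnd. intros Hm' Hx y Hy.
    destruct (Hcov y Hy) as [Hy' | ->]; auto. }
  boolean_taut.
Qed.

Definition inconsistent (l : list (form P)) : Prop := PrfK4 p0 (Imp (bigAnd p0 l) Bot).

Definition mcs (s : form P -> Prop) : Prop :=
  consistent inconsistent s /\ forall x, consistent inconsistent (fun y => s y \/ y = x) -> s x.

Lemma consistent_not_deriv (s : form P -> Prop) :
  consistent inconsistent s <-> ~ deriv s Bot.
Proof.
  split.
  - intros Hs [l [Hl Hbot]]. exact (Hs l Hl Hbot).
  - intros Hs l Hl Hbot. apply Hs. exists l. auto.
Qed.

Section MaximalConsistent.
Variable s : form P -> Prop.
Hypothesis Hs : mcs s.

Lemma mcs_deriv (f : form P) : deriv s f -> s f.
Proof.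
  intros Hf. apply (proj2 Hs). apply consistent_not_deriv. intros Hbot.
  apply (proj1 (consistent_not_deriv s) (proj1 Hs)).
  apply (deriv_taut2 s f (Imp f Bot)); [boolean_taut | exact Hf | exact (deduction s f Bot Hbot)].
Qed.

Lemma mcs_thm (f : form P) : PrfK4 p0 f -> s f.
Proof. intros Hf. apply mcs_deriv, deriv_thm, Hf. Qed.

Lemma mcs_taut1 (a b : form P) :
  (forall v, beval v a = true -> beval v b = true) -> s a -> s b.
Proof.
  intros H Ha. apply mcs_deriv.
  apply (deriv_taut1 s a); [exact H | apply deriv_assum, Ha].
Qed.

Lemma mcs_taut2 (a b c : form P) :
  (forall v, beval v a = true -> beval v b = true -> beval v c = true) -> s a -> s b -> s c.
Proof.
  intros H Ha Hb. apply mcs_deriv.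
  apply (deriv_taut2 s a b); [exact H | apply deriv_assum, Ha | apply deriv_assum, Hb].
Qed.

Lemma mcs_neg (a : form P) : s (Neg a) <-> ~ s a.
Proof.
  split.
  - intros Hna Ha. apply (proj1 (consistent_not_deriv s) (proj1 Hs)).
    apply (deriv_taut2 s a (Neg a));
      [boolean_taut | apply deriv_assum, Ha | apply deriv_assum, Hna].
  - intros Hna. apply mcs_deriv.
    assert (Hbot : deriv (fun y => s y \/ y = a) Bot).
    { apply NNPP. intros Hc. apply Hna, (proj2 Hs), consistent_not_deriv, Hc. }
    apply (deriv_taut1 s (Imp a Bot)); [boolean_taut | exact (deduction s a Bot Hbot)].
Qed.

Lemma mcs_and (a b : form P) : s (And a b) <-> s a /\ s b.
Proof.
  split.
  - intros Hab. split; revert Hab; apply mcs_taut1; boolean_taut.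
  - intros [Ha Hb]. revert Ha Hb. apply mcs_taut2. boolean_taut.
Qed.

Lemma mcs_or (a b : form P) : s (Or a b) <-> s a \/ s b.
Proof. unfold Or. rewrite mcs_neg, mcs_and, !mcs_neg. tauto. Qed.

Lemma mcs_mp (a b : form P) : s (Imp a b) -> s a -> s b.
Proof. apply mcs_taut2. boolean_taut. Qed.

End MaximalConsistent.
End Derivations.

Section Canonical.
Variables (P : Type) (p0 : P).

Section BoxFacts.
Variable s : form P -> Prop.
Hypothesis Hs : mcs P p0 s.

Lemma box_re (a b : form P) : PrfK4 p0 (Iff a b) -> s (Box a) -> s (Box b).
Proof.
  intros Hab. apply (mcs_mp P p0 s Hs). apply (mcs_thm P p0 s Hs).
  apply (prf_taut1 P p0 (Iff (Box a) (Box b))); [boolean_taut | exact (r_re P p0 a b Hab)].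
Qed.

Lemma box_equiv (a b : form P) :
  (forall v, beval v a = beval v b) -> s (Box a) -> s (Box b).
Proof.
  intros H. apply box_re, ax_taut. intros v. specialize (H v).
  unfold Iff, Imp. simpl. rewrite H. destruct (beval v b); reflexivity.
Qed.

Lemma box_neg (a : form P) : s (Box a) <-> s (Box (Neg a)).
Proof.
  assert (H := mcs_thm P p0 s Hs _ (ax_neg P p0 a)).
  split; apply (mcs_mp P p0 s Hs); revert H; apply (mcs_taut1 P p0 s Hs); boolean_taut.
Qed.

Lemma box_and (a b : form P) : s (Box a) -> s (Box b) -> s (Box (And a b)).
Proof.
  intros Ha Hb. apply (mcs_mp P p0 s Hs _ _ (mcs_thm P p0 s Hs _ (ax_and P p0 a b))).
  apply (mcs_and P p0 s Hs). auto.
Qed.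

Lemma box_split (f g h : form P) :
  s (Box f) -> s (Box (Or f g)) \/ s (Box (Or (Neg f) h)).
Proof.
  intros Hf. apply (mcs_or P p0 s Hs).
  exact (mcs_mp P p0 s Hs _ _ (mcs_thm P p0 s Hs _ (ax_or P p0 f g h)) Hf).
Qed.

Definition Nec (psi : form P) : Prop := forall chi, s (Box (Or chi psi)).

Lemma nec_box (f : form P) : Nec f -> s (Box f).
Proof. intros H. apply (box_equiv (Or f f)); [boolean_taut | exact (H f)]. Qed.

Lemma nec_mono (a b : form P) : Nec a -> PrfK4 p0 (Imp a b) -> Nec b.
Proof.
  intros Ha Hab chi. apply (box_re (Or (Or chi b) a)); [|exact (Ha (Or chi b))].
  revert Hab. apply prf_taut1. boolean_taut.
Qed.

Lemma nec_bigAnd (m : list (form P)) : (forall y, In y m -> Nec y) -> Nec (bigAnd p0 m).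
Proof.
  induction m as [|a m IH]; intros Hm chi.
  - apply (box_equiv (Top p0)); [boolean_taut | exact (mcs_thm P p0 s Hs _ (ax_top P p0))].
  - assert (Ha := Hm a (or_introl eq_refl) chi).
    assert (Hrest := IH (fun y Hy => Hm y (or_intror Hy)) chi).
    apply (box_equiv (And (Or chi a) (Or chi (bigAnd p0 m))));
      [boolean_taut | exact (box_and _ _ Ha Hrest)].
Qed.

Lemma nec_of_box (f chi : form P) :
  s (Box f) -> s (Box (Or f chi)) -> ~ s (Box chi) -> Nec f.
Proof.
  intros Hf Hfchi Hchi chi'. destruct (box_split f chi' chi Hf) as [H | H].
  - apply (box_equiv (Or f chi')); [boolean_taut | exact H].
  - exfalso. apply Hchi. apply (box_equiv (And (Or f chi) (Or (Neg f) chi)));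
      [boolean_taut | exact (box_and _ _ Hfchi H)].
Qed.

End BoxFacts.

(* The canonical relation (used for both [R1] and [R2]): [t] is a successor of [s] when
   [t] contains every formula necessary at [s], provided [s] does not contain every boxed
   formula (such an [s] has no successors, which makes all boxes true there). *)
Definition canon_rel (s t : form P -> Prop) : Prop :=
  (exists chi, ~ s (Box chi)) /\ forall psi, Nec s psi -> t psi.

Lemma canon_box_agree (s t u : form P -> Prop) (phi : form P) :
  mcs P p0 s -> mcs P p0 t -> mcs P p0 u -> s (Box phi) ->
  canon_rel s t -> canon_rel s u -> (t phi <-> u phi).
Proof.
  intros Hs Ht Hu Hphi [[chi Hchi] Hst] [_ Hsu].
  destruct (box_split s Hs phi chi chi Hphi) as [H | H].
  - assert (N := nec_of_box s Hs phi chi Hphi H Hchi). split; auto.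
  - apply (box_neg s Hs) in Hphi.
    assert (N := nec_of_box s Hs (Neg phi) chi Hphi H Hchi).
    assert (Nt := Hst _ N). assert (Nu := Hsu _ N).
    rewrite (mcs_neg P p0 t Ht) in Nt. rewrite (mcs_neg P p0 u Hu) in Nu. tauto.
Qed.

(* If [Box x] is not in [s], some canonical successor of [s] contains [x]: the necessary
   formulas of [s] together with [x] are consistent, and extend to a maximal set. *)
Lemma canon_witness (s : form P -> Prop) (x : form P) :
  mcs P p0 s -> ~ s (Box x) -> exists t, mcs P p0 t /\ canon_rel s t /\ t x.
Proof.
  intros Hs Hx.
  assert (Hcons : consistent (inconsistent P p0) (fun y => Nec s y \/ y = x)).
  { apply consistent_not_deriv. intros Hbot.
    destruct (deduction P p0 (Nec s) x (Bot P p0) Hbot) as [m [Hm Hmx]].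
    apply Hx, (box_neg s Hs), (nec_box s Hs).
    apply (nec_mono s Hs (bigAnd p0 m)); [exact (nec_bigAnd s Hs m Hm)|].
    revert Hmx. apply prf_taut1. boolean_taut. }
  destruct (lindenbaum _ _ _ Hcons) as [t [Hsub [Htc Htmax]]].
  exists t. split; [split; assumption|]. split; [|apply Hsub; right; reflexivity].
  split; [exists x; exact Hx|]. intros psi Hpsi. apply Hsub. left. exact Hpsi.
Qed.

(* Axiom 4 makes the canonical relation transitive. *)
Lemma canon_rel_trans (s t u : form P -> Prop) :
  mcs P p0 s -> canon_rel s t -> canon_rel t u -> canon_rel s u.
Proof.
  intros Hs [Hs_nb Hst] [_ Htu]. split; [exact Hs_nb|].
  intros psi Hpsi. apply Htu. intros chi'. apply Hst. intros chi.
  assert (H4 : s (Box (Or (Box (Or chi' psi)) chi))).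
  { apply (mcs_mp P p0 s Hs _ _ (mcs_thm P p0 s Hs _ (ax_4 P p0 _ _))). apply Hpsi. }
  revert H4. apply (box_equiv s Hs). boolean_taut.
Qed.

Definition canon_world : Type := {s : form P -> Prop | mcs P p0 s}.
Definition canon_R (a b : canon_world) : Prop := canon_rel (proj1_sig a) (proj1_sig b).
Definition canon_V (p : P) (a : canon_world) : Prop := proj1_sig a (Var p).

Lemma canon_pseudo_transitive : pseudo_transitive canon_R canon_R.
Proof.
  intros i j a b c Hab Hbc.
  assert (Hac : canon_R a c).
  { destruct i, j; exact (canon_rel_trans _ _ _ (proj2_sig a) Hab Hbc). }
  split; exact Hac.
Qed.

Lemma truth_lemma (f : form P) (a : canon_world) :
  sat P canon_R canon_R canon_V a f <-> proj1_sig a f.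
Proof.
  revert a. induction f as [p | f IH | f IHf g IHg | f IH]; intros [s Hs]; simpl.
  - reflexivity.
  - rewrite (IH (exist _ s Hs)), (mcs_neg P p0 s Hs). reflexivity.
  - rewrite (IHf (exist _ s Hs)), (IHg (exist _ s Hs)), (mcs_and P p0 s Hs). reflexivity.
  - split.
    + intros Hagree. apply NNPP. intros Hnf.
      destruct (canon_witness s f Hs Hnf) as [t [Ht [Hst Hft]]].
      assert (Hnnf : ~ s (Box (Neg f))) by (rewrite <- (box_neg s Hs); exact Hnf).
      destruct (canon_witness s (Neg f) Hs Hnnf) as [u [Hu [Hsu Hfu]]].
      specialize (Hagree (exist _ t Ht) (exist _ u Hu) Hst Hsu).
      rewrite (IH (exist _ t Ht)), (IH (exist _ u Hu)) in Hagree. simpl in Hagree.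
      rewrite (mcs_neg P p0 u Hu) in Hfu. tauto.
    + intros Hf [t Ht] [u Hu] Hst Hsu.
      rewrite (IH (exist _ t Ht)), (IH (exist _ u Hu)).
      exact (canon_box_agree s t u f Hs Ht Hu Hf Hst Hsu).
Qed.

End Canonical.

Lemma strong_soundness (P : Type) (p0 : P) (Gamma : form P -> Prop) (phi : form P) :
  derivK4 P p0 Gamma phi -> conseq_qt P Gamma phi.
Proof.
  intros [l [Hl Hprf]] S R1 R2 V s Hqt HGamma.
  apply (sat_imp P S R1 R2 V s (bigAnd p0 l) phi).
  - exact (soundness P p0 S R1 R2 V _ Hqt Hprf s).
  - apply sat_bigAnd. intros g Hg. apply HGamma, Hl, Hg.
Qed.

Lemma pseudo_quasi_transitive (S : Type) (R1 R2 : S -> S -> Prop) :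
  pseudo_transitive R1 R2 -> quasi_transitive R1 R2.
Proof.
  intros Hpt i j x y z Hxy Hyz. destruct (Hpt i j x y z Hxy Hyz) as [H1 H2].
  destruct j; assumption.
Qed.

(* If [Gamma] does not derive [phi], then [Gamma] plus [Neg phi] extends to a maximal
   consistent set, which refutes [phi] in the (pseudo-transitive) canonical model. *)
Lemma strong_completeness (P : Type) (p0 : P) (Gamma : form P -> Prop) (phi : form P) :
  conseq_pt P Gamma phi -> derivK4 P p0 Gamma phi.
Proof.
  intros Hpt. apply NNPP. intros Hnd.
  assert (Hcons : consistent (inconsistent P p0) (fun y => Gamma y \/ y = Neg phi)).
  { apply consistent_not_deriv. intros Hbot. apply Hnd.
    apply (deriv_taut1 P p0 Gamma (Imp (Neg phi) (Bot P p0))); [boolean_taut|].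
    exact (deduction P p0 Gamma (Neg phi) (Bot P p0) Hbot). }
  destruct (lindenbaum _ _ _ Hcons) as [M [Hsub [HMc HMmax]]].
  set (w := exist _ M (conj HMc HMmax) : canon_world P p0).
  assert (Hphi : M phi).
  { apply (truth_lemma P p0 phi w).
    apply (Hpt _ _ _ _ w (canon_pseudo_transitive P p0)).
    intros g Hg. apply (truth_lemma P p0 g w), Hsub. left. exact Hg. }
  apply (mcs_neg P p0 M (conj HMc HMmax) phi); [apply Hsub; right; reflexivity | exact Hphi].
Qed.

Theorem mainTheorem19 (P : Type) (p0 : P) (Gamma : form P -> Prop) (phi : form P) :
  (derivK4 P p0 Gamma phi <-> conseq_qt P Gamma phi) /\
  (conseq_qt P Gamma phi <-> conseq_pt P Gamma phi).
Proof.
  assert (Hqt_pt : conseq_qt P Gamma phi -> conseq_pt P Gamma phi).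
  { intros H S R1 R2 V s Hpt. apply H, pseudo_quasi_transitive, Hpt. }
  assert (Hpt_der := strong_completeness P p0 Gamma phi).
  assert (Hder_qt := strong_soundness P p0 Gamma phi).
  split; split; auto.
Qed.
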